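(* In the SODA algorithm described in the context, the communication cost of a successful write operation is at most $5f^2$, i.e., $O(f^2)$.
   Context: System model: asynchronous message passing with writers $\mathcal{W}$, readers $\mathcal{R}$ and $n$ servers ordered $s_1<\dots<s_n$; reliable point-to-point channels between every client and server and every two servers; crash failures only; any number of clients and at most $f$ servers crash, $1\le f\le (n-1)/2$. Coding: values of size 1 unit; an $[n,k]$ MDS code with $k=n-f$, encoder $\Phi$ producing coded elements $\Phi_s(v)$, $s\in\mathcal{S}$, each of size $1/k$. SODA write by writer $w$ of value $v$: (get-tag phase) query all servers for their locally stored tags, wait for a majority of responses, let $t_{max}$ be the largest; (put phase) form tag $t_w=(t_{max}.z+1,w)$ and invoke md-value-send$(t_w,v)$, then wait for acknowledgments from $k$ servers. md-value-send$(t_w,v)$: the writer sends the uncoded $(t_w,v)$ to servers $s_1,\dots,s_{f+1}$ in order; each $s_i$ ($i\le f+1$), on first receipt, sends $(t_w,v)$ to $s_{i+1},\dots,s_{f+1}$, sends $(t_w,\Phi_{s'}(v))$ to every server $s'\notin\{s_1,\dots,s_{f+1}\}$, and delivers $(t_w,\Phi_{s_i}(v))$ locally; each other server delivers the coded element it receives. A server that delivers a coded element stores it if its tag exceeds the stored tag, forwards it to currently registered readers with smaller or equal requested tags (this is accounted to reads), and acknowledges to the writer. Communication cost of an operation: total size of the value/coded-element data carried in all messages sent as part of the operation, normalized by the value size; metadata (tags, ids, acknowledgments) is ignored. *)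

From mathcomp Require Import all_boot all_order all_algebra.
Unset Printing Implicit Defensive.
Import Order.TTheory GRing.Theory Num.Theory.

(* Abstract model of the messages sent as part of ONE write operation of SODA
   by a writer w, in a system with n servers s_1 < ... < s_n.
   - A node is [None] (the writer w) or [Some i] (server s_{i+1}, 0-indexed).
   - A payload is [None] (metadata only: tag queries, tag responses, acks),
     [Some true] (the uncoded pair (t_w, v), size 1) or
     [Some false] (a coded element (t_w, Phi_s(v)), size 1/k, k = n - f).
   A message is (sender, receiver, payload).  Since every step of the
   protocol sends a given message at most once (servers relay only on first
   receipt), the messages of an execution of the write form a SET. *)

Definition node (n : nat) := option 'I_n.
Definition payload := option bool.
Definition msg (n : nat) := (node n * node n * payload)%type.

Definition meta : payload := None.
Definition uncoded : payload := Some true.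
Definition coded : payload := Some false.

Definition write_msg_ok (n f : nat) (m : msg n) : bool :=
  match m with
  (* get-tag queries / put-phase: writer to servers *)
  | (None, Some r, None) => true
  | (None, Some r, Some true) => (r < f.+1)%N
  (* tag responses and acknowledgments: servers to writer *)
  | (Some i, None, None) => true
  (* md-value-send relays by s_{i+1}, i < f+1 *)
  | (Some i, Some r, Some true) => (i < r)%N && (r < f.+1)%N
  | (Some i, Some r, Some false) => (i < f.+1)%N && (f.+1 <= r)%N
  | _ => false
  end.

Definition write_execution (n f : nat) (M : {set msg n}) : Prop :=
  forall m, m \in M -> write_msg_ok n f m.

(* Size of the value/coded data carried by a message, normalized by the
   value size; metadata is ignored. *)
Definition payload_size (n f : nat) (p : payload) : rat :=
  match p with
  | None => 0
  | Some true => 1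
  | Some false => ((n - f)%:R)^-1
  end.

Definition comm_cost (n f : nat) (M : {set msg n}) : rat :=
  \sum_(m in M) payload_size n f (m.2).

From mathcomp Require Import all_boot all_order all_algebra.
From mathcomp Require Import zify.
Import Order.TTheory GRing.Theory Num.Theory.

(* Split the cost by payload: each uncoded message costs 1 and each coded one
   1/(n - f).  The uncoded messages are the f + 1 sent by the writer plus the
   relays s_i -> s_r with i < r <= f, at most f * f of them; the coded messages
   go from one of the f + 1 first servers to one of the other n - f - 1, so they
   cost less than f + 1 in total.  Finally 2(f + 1) + f^2 <= 5 f^2 for f >= 1. *)

Definition ord_range (n a b : nat) : {set 'I_n} := [set r : 'I_n | a <= r < b].

Lemma card_ord_range (n a b : nat) : #|ord_range n a b| <= b - a.
Proof.
rewrite cardE -(size_map val) -[b - a](size_iota a).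
apply: uniq_leq_size; first by rewrite map_inj_uniq ?enum_uniq //; exact: val_inj.
move=> _ /mapP[r +] ->; rewrite mem_enum inE => /andP[ar rb].
rewrite mem_iota ar /=; lia.
Qed.

Definition with_payload (n : nat) (p : payload) : {set msg n} := [set m | m.2 == p].

Section WriteMessages.

Variables (n f : nat) (M : {set msg n}).
Hypothesis HM : write_execution n f M.

Lemma card_uncoded_le : #|M :&: with_payload n uncoded| <= f.+1 + f * f.
Proof.
pose from_writer r : msg n := (None, Some r, uncoded).
pose relay (ir : 'I_n * 'I_n) : msg n := (Some ir.1, Some ir.2, uncoded).
have sub : M :&: with_payload n uncoded \subset
    from_writer @: ord_range n 0 f.+1
    :|: relay @: setX (ord_range n 0 f) (ord_range n 1 f.+1).
  apply/subsetP => -[[[i|] [r|]] p]; rewrite !inE andbC => /andP[/eqP /= -> /HM] //=.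
  - move=> /andP[ir rf]; apply/orP; right; apply/imsetP.
    by exists (i, r); rewrite // !inE /=; apply/andP; split; lia.
  - by move=> rf; apply/orP; left; apply/imsetP; exists r; rewrite // inE.
apply: (leq_trans (subset_leq_card sub)); rewrite cardsU.
apply: (leq_trans (leq_subr _ _)); apply: leq_add.
  by apply: (leq_trans (leq_imset_card _ _)); rewrite -[f.+1]subn0 card_ord_range.
apply: (leq_trans (leq_imset_card _ _)); rewrite cardsX.
by apply: leq_mul; apply: (leq_trans (card_ord_range _ _ _)); lia.
Qed.

Lemma card_coded_le : #|M :&: with_payload n coded| <= f.+1 * (n - f.+1).
Proof.
pose relay (ir : 'I_n * 'I_n) : msg n := (Some ir.1, Some ir.2, coded).
have sub : M :&: with_payload n coded \subset
    relay @: setX (ord_range n 0 f.+1) (ord_range n f.+1 n).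
  apply/subsetP => -[[[i|] [r|]] p]; rewrite !inE andbC => /andP[/eqP /= -> /HM] //=.
  move=> /andP[if_ fr].
  by apply/imsetP; exists (i, r); rewrite // !inE /= if_ fr ltn_ord.
apply: (leq_trans (subset_leq_card sub)).
apply: (leq_trans (leq_imset_card _ _)); rewrite cardsX.
by apply: leq_mul; apply: (leq_trans (card_ord_range _ _ _)); lia.
Qed.

End WriteMessages.

Local Open Scope ring_scope.

Lemma comm_cost_split (n f : nat) (M : {set msg n}) :
  comm_cost n f M = #|M :&: with_payload n uncoded|%:R
                    + #|M :&: with_payload n coded|%:R / (n - f)%:R.
Proof.
rewrite /comm_cost (big_setID (with_payload n uncoded)) /=.
rewrite [X in _ + X](big_setID (with_payload n coded)) /=.
have -> : (M :\: with_payload n uncoded) :&: with_payload n coded =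
          M :&: with_payload n coded.
  by apply/setP => -[? [[]|]]; rewrite !inE /= ?andbT ?andbF.
rewrite [X in _ + (_ + X)]big1 => [|m]; last first.
  by case: m => ? [[]|]; rewrite !inE.
rewrite addr0 (eq_bigr (fun _ => 1)) => [|m]; last first.
  by rewrite !inE => /andP[_ /eqP ->].
rewrite [X in _ + X](eq_bigr (fun _ => (n - f)%:R^-1)) => [|m]; last first.
  by rewrite !inE => /andP[_ /eqP ->].
by rewrite !sumr_const -[X in _ + X]mulr_natr mulrC.
Qed.

Theorem theorem6 (n f : nat) (hf1 : (1 <= f)%N) (hfn : (2 * f <= n - 1)%N)
  (M : {set msg n}) :
  write_execution n f M -> comm_cost n f M <= (5 * f ^ 2)%:R.
Proof.
move=> HM; rewrite comm_cost_split.
have nf_gt0 : 0 < (n - f)%:R :> rat by rewrite ltr0n; lia.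
have coded_le : #|M :&: with_payload n coded|%:R / (n - f)%:R <= f.+1%:R :> rat.
  rewrite ler_pdivrMr // -natrM ler_nat (leq_trans (card_coded_le _ _ _ HM)) //.
  by rewrite leq_mul2l; lia.
have uncoded_le : #|M :&: with_payload n uncoded|%:R <= (f.+1 + f * f)%:R :> rat.
  by rewrite ler_nat (card_uncoded_le _ _ _ HM).
apply: le_trans (lerD uncoded_le coded_le) _.
rewrite -natrD ler_nat; nia.
Qed.
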